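(* The knowledge state algorithm $K_2$ for the $2$-cache problem is $\tfrac32$-competitive: there is a constant $K$ such that $E(\mathrm{cost}_{K_2}(\varrho))\le\tfrac32\,\mathrm{cost}_{\mathrm{opt}}(\varrho)+K$ for every finite request sequence $\varrho$.
   Context: The $k$-cache problem: there is an infinite set $P$ of pages; the state set $\mathcal X$ is the set of $k$-element subsets of $P$ (cache contents), with a given initial cache $s^0$; the requests are the pages, $\mathcal R=P$; $d(x,y)=|x\setminus y|$; and $\mathrm{cost}(x,r,y)=2$ if $x=y$ and $r\notin x$; $\mathrm{cost}(x,r,y)=d(x,y)$ if $r\in x$ or $r\in y$; $\mathrm{cost}(x,r,y)=d(x,y)+1$ otherwise. For $\varrho=r^1\dots r^n$, $\mathrm{cost}_{\mathrm{opt}}(\varrho)$ is the minimum of $\sum_t\mathrm{cost}(x^{t-1},r^t,x^t)$ over $x^1,\dots,x^n\in\mathcal X$ with $x^0=s^0$. $\Pi$ is the set of finitely supported probability distributions on $\mathcal X$; for $\pi,\pi'\in\Pi$, $\mathrm{cost}(\pi,r,\pi')$ is the minimum of $\sum_{x,y}\gamma(x,y)\mathrm{cost}(x,r,y)$ over distributions $\gamma$ on $\mathrm{supp}(\pi)\times\mathrm{supp}(\pi')$ with marginals $\pi,\pi'$. Bar notation: a string $\alpha$ of distinct page names and exactly $k$ bars, with at least $i$ page names to the left of the $i$-th bar, denotes the estimator $\omega_\alpha(y)=\min_{x\in S_\alpha}d(x,y)$, where $S_\alpha$ is the set of configurations $x$ such that for each $i=1,\dots,k$ at least $i$ elements of $x$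 are written to the left of the $i$-th bar. Algorithm $K_2$ ($k=2$; $a,b,c,d$ always denote distinct pages). It is a randomized algorithm whose state is a pair (distribution, estimator). States: $A^{a,b}=(\{a,b\},\ ab||)$ (point mass on $\{a,b\}$; $A^{a,b}=A^{b,a}$), and $B^{a,b,c}=(\tfrac12\{a,b\}+\tfrac12\{a,c\},\ a|bc|)$ ($B^{a,b,c}=B^{a,c,b}$). Initial state $A^{a,b}$ where $s^0=\{a,b\}$. Transitions: from $A^{a,b}$: request $a$ or $b$: stay; request $c\notin\{a,b\}$: go to $B^{c,a,b}$. From $B^{a,b,c}$: request $a$: stay; request $b$: go to $A^{b,a}$; request $c$: go to $A^{c,a}$; request $d\notin\{a,b,c\}$: go to each of $A^{d,a},A^{d,b},A^{d,c}$ with probability $\tfrac13$. The cost of a step from state $(\pi,\omega)$ on request $r$, whose successor states $(\pi_i,\omega_i)$ have probabilities $\lambda_i$, is $\mathrm{cost}(\pi,r,\sum_i\lambda_i\pi_i)$; $\mathrm{cost}_{K_2}(\varrho)$ is the (random) sum of step costs. *)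

From HB Require Import structures.
From mathcomp Require Import all_boot all_order all_algebra.
From mathcomp Require Import finmap.
From mathcomp Require Import boolp classical_sets reals.
Set Implicit Arguments. Unset Strict Implicit. Unset Printing Implicit Defensive.
Import Order.TTheory GRing.Theory Num.Theory.
Local Open Scope ring_scope.

Section KCache.
Variables (R : realType) (P : choiceType).

Definition conf := {fset P}.
Definition is_conf2 (x : conf) : bool := (#|` x |%fset == 2)%N.

Definition dist (x y : conf) : nat := #|` (x `\` y)%fset |%fset.

Definition cost (x : conf) (r : P) (y : conf) : R :=
  if (x == y) && (r \notin x) then 2
  else if (r \in x) || (r \in y) then (dist x y)%:R
  else (dist x y)%:R + 1.

(** A finitely supported (probability) distribution on configurations,
    represented as a finite weighted formal sum  sum_i w_i [x_i]. *)
Definition fdist := seq (R * conf).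
Definition mass (pi : fdist) (x : conf) : R := \sum_(p <- pi | p.2 == x) p.1.

Definition coupling (pi pi' : fdist) (gamma : seq (R * (conf * conf))) : Prop :=
  [/\ forall g, g \in gamma -> 0 <= g.1,
      forall g, g \in gamma -> mass pi g.2.1 != 0 /\ mass pi' g.2.2 != 0,
      forall x, \sum_(g <- gamma | g.2.1 == x) g.1 = mass pi x &
      forall y, \sum_(g <- gamma | g.2.2 == y) g.1 = mass pi' y].

Definition dcost (pi : fdist) (r : P) (pi' : fdist) : R :=
  inf [set c : R | exists gamma, coupling pi pi' gamma /\
                   c = \sum_(g <- gamma) g.1 * cost g.2.1 r g.2.2].

Fixpoint sched_cost (x0 : conf) (rho : seq P) (xs : seq conf) : R :=
  match rho, xs with
  | r :: rho', y :: xs' => cost x0 r y + sched_cost y rho' xs'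
  | _, _ => 0
  end.

Definition cost_opt (s0 : conf) (rho : seq P) : R :=
  inf [set c : R | exists xs : seq conf,
         [/\ size xs = size rho, all is_conf2 xs & c = sched_cost s0 rho xs]].

(** States of K_2 (the estimator component does not influence transitions
    or costs).
    SA a b  = A^{a,b} : point mass on {a,b}
    SB a b c = B^{a,b,c} : 1/2 {a,b} + 1/2 {a,c} *)
Inductive k2state := SA of P & P | SB of P & P & P.

Definition k2dist (s : k2state) : fdist :=
  match s with
  | SA a b => [:: (1, [fset a; b]%fset)]
  | SB a b c => [:: (2^-1, [fset a; b]%fset); (2^-1, [fset a; c]%fset)]
  end.

Definition k2trans (s : k2state) (r : P) : seq (R * k2state) :=
  match s with
  | SA a b => if (r == a) || (r == b) then [:: (1, SA a b)]
              else [:: (1, SB r a b)]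
  | SB a b c =>
      if r == a then [:: (1, SB a b c)]
      else if r == b then [:: (1, SA b a)]
      else if r == c then [:: (1, SA c a)]
      else [:: (3^-1, SA r a); (3^-1, SA r b); (3^-1, SA r c)]
  end.

Definition mixture (succ : seq (R * k2state)) : fdist :=
  flatten [seq [seq (p.1 * q.1, q.2) | q <- k2dist p.2] | p <- succ].

Definition k2step_cost (s : k2state) (r : P) : R :=
  dcost (k2dist s) r (mixture (k2trans s r)).

Fixpoint k2_expected_cost (s : k2state) (rho : seq P) : R :=
  match rho with
  | [::] => 0
  | r :: rho' => k2step_cost s r +
                 \sum_(p <- k2trans s r) p.1 * k2_expected_cost p.2 rho'
  end.

End KCache.

From HB Require Import structures.
From mathcomp Require Import all_boot all_order all_algebra.
From mathcomp Require Import finmap.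
From mathcomp Require Import boolp classical_sets reals.
From mathcomp Require Import zify ring lra.
Import Order.TTheory GRing.Theory Num.Theory.
Local Open Scope fset_scope.
Local Open Scope ring_scope.
Set Implicit Arguments. Unset Strict Implicit. Unset Printing Implicit Defensive.

(* Against an adversary in configuration y, charge the
   state of K_2 with 3/2 times its estimator at y, plus 1/2 in a B state; this
   potential vanishes at the initial state.  If the request lies in the
   adversary's configuration, the step cost of K_2 plus the expected new
   potential is at most the old potential (a finite case check with explicit
   couplings).  The potential is 3/2-Lipschitz for d, and an adversary step
   x -> y serving r costs at least d(x,z) + d(z,y) for some configuration z
   holding r.  Hence every step costs K_2, in expectation and amortized, at
   most 3/2 of the adversary's cost, with additive constant 0. *)

Lemma ler_sum_all (R : numDomainType) (T : Type) (s : seq T) (F G : T -> R) :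
  all (fun i => F i <= G i) s -> \sum_(i <- s) F i <= \sum_(i <- s) G i.
Proof.
elim: s => [|i s IH] /=; first by rewrite !big_nil.
by case/andP => FGi FGs; rewrite !big_cons lerD // IH.
Qed.

Lemma sum_weighted_const (R : pzSemiRingType) (T : Type) (s : seq (R * T)) (c : R) :
  \sum_(p <- s) p.1 = 1 -> \sum_(p <- s) p.1 * c = c.
Proof. by move=> sum1; rewrite -mulr_suml sum1 mul1r. Qed.

Section Configurations.
Variable P : choiceType.
Implicit Types (p q r : P) (x y z : conf P).

Lemma dist_pair p q y :
  p != q -> dist [fset p; q] y = ((p \notin y) + (q \notin y))%N.
Proof.
move=> pq; have qp : q != p by rewrite eq_sym.
rewrite /dist.
have -> : [fset p; q] `\` y =
    (if p \in y then fset0 else [fset p]) `|` (if q \in y then fset0 else [fset q]).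
  apply/fsetP => z; rewrite !inE.
  have [->|zp] := eqVneq z p; last have [->|zq] := eqVneq z q;
    by case: (p \in y); case: (q \in y);
      rewrite !inE /= ?eqxx ?(negbTE pq) ?(negbTE qp) ?(negbTE zp) ?(negbTE zq)
        ?orbF ?orbT ?andbF.
case: (p \in y); case: (q \in y); rewrite ?fset0U ?fsetU0 ?cardfs0 ?cardfs1 //=.
by rewrite cardfsU1 !inE (negbTE pq) cardfs1.
Qed.

Lemma dist_triangle x y z : (dist x z <= dist x y + dist y z)%N.
Proof.
rewrite /dist; apply: leq_trans (leq_card_fsetU _ _).
apply: fsubset_leq_card; apply/fsubsetP => w; rewrite !inE.
by case: (w \in y); case: (w \in z); case: (w \in x).
Qed.

Lemma dist_xx x : dist x x = 0%N.
Proof. by rewrite /dist fsetDv cardfs0. Qed.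

Lemma is_conf2_pair p q : p != q -> is_conf2 [fset p; q].
Proof. by move=> pq; rewrite /is_conf2 cardfs2 pq. Qed.

Lemma conf2P x : is_conf2 x -> exists p q, p != q /\ x = [fset p; q].
Proof.
rewrite /is_conf2 => /eqP cx.
have /fset0Pn [p px] : x != fset0 by apply/eqP => x0; rewrite x0 cardfs0 in cx.
have /cardfs1P [q xDp] : #|` x `\ p| == 1%N.
  by move: (cardfsD1 p x); rewrite px cx add1n => -[<-].
exists p, q; split; last by rewrite -xDp fsetD1K.
by have := fset11 q; rewrite -xDp !inE eq_sym => /andP [].
Qed.

Lemma dist_eq0_conf2 x y : is_conf2 x -> is_conf2 y -> dist x y = 0%N -> x = y.
Proof.
move=> /eqP cx /eqP cy /cardfs0_eq /eqP; rewrite fsetD_eq0 => sxy.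
by apply/eqP; rewrite eqEfcard sxy cx cy.
Qed.

Lemma min_dist_pairs a b c y : a != b -> a != c ->
  minn (dist [fset a; b] y) (dist [fset a; c] y) =
  ((a \notin y) + ((b \notin y) && (c \notin y)))%N.
Proof.
by move=> ab ac; rewrite !dist_pair //; case: (a \in y); case: (b \in y); case: (c \in y).
Qed.

End Configurations.

Section Costs.
Variables (R : realType) (P : choiceType).
Implicit Types (r : P) (x y : conf P) (pi : fdist R P).

Lemma cost_ge0 x r y : 0 <= cost R x r y.
Proof. by rewrite /cost; case: ifP => _; last case: ifP => _; rewrite ?addr_ge0. Qed.

Lemma cost_dist_r x r y : r \in y -> cost R x r y = (dist x y)%:R.
Proof. by move=> ry; rewrite /cost ry orbT; case: eqP => // ->; rewrite ry. Qed.

Lemma cost_dist_l x r y : r \in x -> cost R x r y = (dist x y)%:R.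
Proof. by move=> rx; rewrite /cost rx andbF. Qed.

Lemma cost_miss x r y : r \notin x -> r \notin y ->
  cost R x r y = if x == y then 2 else (dist x y)%:R + 1.
Proof. by move=> rx ry; rewrite /cost rx (negbTE rx) (negbTE ry) andbT. Qed.

Lemma mass_ge0 pi x : all (fun p => 0 < p.1) pi -> 0 <= mass pi x.
Proof.
move=> /allP pi_pos; rewrite /mass big_seq_cond.
by apply: sumr_ge0 => p /andP [/pi_pos/ltW].
Qed.

Lemma mass_neq0 pi x :
  all (fun p => 0 < p.1) pi -> x \in map snd pi -> mass pi x != 0.
Proof.
elim: pi => [//|p pi IH] /= /andP [p_pos pi_pos]; rewrite inE /mass big_cons.
have [->|] := eqVneq x p.2; last by move=> _ /IH; apply.
by move=> _; rewrite lt0r_neq0 // ltr_wpDr // (mass_ge0 p.2 pi_pos).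
Qed.

Lemma coupling_intro pi pi' gamma :
  all (fun g => 0 <= g.1) gamma ->
  all (fun p => 0 < p.1) pi -> all (fun p => 0 < p.1) pi' ->
  all (fun g => (g.2.1 \in map snd pi) && (g.2.2 \in map snd pi')) gamma ->
  (forall x, \sum_(g <- gamma | g.2.1 == x) g.1 = mass pi x) ->
  (forall y, \sum_(g <- gamma | g.2.2 == y) g.1 = mass pi' y) ->
  coupling pi pi' gamma.
Proof.
move=> /allP gamma_ge0 pi_pos pi'_pos /allP gamma_supp marg1 marg2; split => //.
by move=> g /gamma_supp /andP [g1 g2]; split; apply: mass_neq0.
Qed.

Lemma dcost_le_coupling pi r pi' gamma : coupling pi pi' gamma ->
  dcost pi r pi' <= \sum_(g <- gamma) g.1 * cost R g.2.1 r g.2.2.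
Proof.
move=> gamma_coupling; apply: ge_inf; last by exists gamma.
exists 0 => c [g [[g_ge0 _ _ _] ->]]; rewrite big_seq.
by apply: sumr_ge0 => i ig; rewrite mulr_ge0 ?g_ge0 ?cost_ge0.
Qed.

End Costs.

Section AdversaryMoves.
Variables (R : realType) (P : choiceType).
Implicit Types (r : P) (x y z : conf P).

Lemma detour_through_request x r y :
  is_conf2 x -> is_conf2 y -> r \notin x -> r \notin y ->
  exists z, [/\ is_conf2 z, r \in z &
    ((dist x z + dist z y)%:R <= cost R x r y :> R)].
Proof.
move=> cx cy rx ry; rewrite cost_miss //.
case/conf2P: cx rx => p [q [pq ->]]; rewrite in_fset2 => /norP [rp rq].
(* z is x with r in place of p, where p is chosen outside y if possible. *)
wlog qyp : p q pq rp rq / q \notin y -> p \notin y => [hwlog|].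
  have [/andP [py _]|pyqy] := boolP ((p \in y) && (q \notin y)).
    by rewrite fsetUC; apply: hwlog => //; [rewrite eq_sym | rewrite py].
  by apply: hwlog => //; move: pyqy; case: (p \in y); case: (q \in y).
exists [fset r; q]; split; [exact: is_conf2_pair | exact: fset21 |].
have pr : p != r by rewrite eq_sym.
have dx : dist [fset p; q] [fset r; q] = 1%N.
  by rewrite dist_pair // !in_fset2 eqxx (negbTE pr) (negbTE pq) orbT.
rewrite dx dist_pair // ry /=.
have [qy|qy] := boolP (q \in y).
  have [_|xy] := eqVneq [fset p; q] y; first by [].
  have : dist [fset p; q] y != 0%N.
    by apply: contra_neq xy; apply: dist_eq0_conf2; rewrite ?is_conf2_pair.
  by rewrite -lt0n natr1 ler_nat.
have -> : ([fset p; q] == y) = false.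
  by apply/negbTE; apply: contraNneq qy => <-; rewrite fset22.
by rewrite dist_pair // qy (qyp qy) natr1 ler_nat.
Qed.

Lemma amortize_adversary_move (alpha c : R) (F G : conf P -> R) r x y :
  0 <= alpha ->
  (forall z, is_conf2 z -> r \in z -> c + F z <= G z) ->
  (forall u v, F v <= F u + alpha * (dist u v)%:R) ->
  (forall u v, G v <= G u + alpha * (dist u v)%:R) ->
  is_conf2 x -> is_conf2 y -> c + F y <= alpha * cost R x r y + G x.
Proof.
move=> alpha_ge0 served F_lip G_lip cx cy.
have [ry|ry] := boolP (r \in y).
  by rewrite cost_dist_r //; apply: le_trans (served y cy ry) _; rewrite addrC G_lip.
have [rx|rx] := boolP (r \in x).
  rewrite cost_dist_l //; have := served x cx rx; have := F_lip x y; lra.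
have [z [cz rz xzy]] := detour_through_request cx cy rx ry.
have := served z cz rz; have := F_lip z y; have := G_lip x z.
have := ler_wpM2l alpha_ge0 xzy; rewrite natrD; nra.
Qed.

End AdversaryMoves.

Section K2Potential.
Variables (R : realType) (P : choiceType).
Implicit Types (r : P) (x y : conf P) (s : k2state P).

Definition k2state_wf s : bool :=
  match s with
  | SA a b => a != b
  | SB a b c => [&& a != b, a != c & b != c]
  end.

(* The estimator of A^{a,b} is d({a,b}, _); that of B^{a,b,c} (bar string
   a|bc|) is the distance to the nearer of {a,b} and {a,c}. *)
Definition k2_potential s y : R :=
  match s with
  | SA a b => 3 / 2 * (dist [fset a; b] y)%:R
  | SB a b c => 3 / 2 * (minn (dist [fset a; b] y) (dist [fset a; c] y))%:R + 2^-1
  end.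

Definition k2_exp_potential s r y : R :=
  \sum_(p <- k2trans R s r) p.1 * k2_potential p.2 y.

Lemma k2_potential_ge0 s y : 0 <= k2_potential s y.
Proof. by case: s => [a b|a b c] /=; rewrite ?addr_ge0 ?mulr_ge0 ?divr_ge0 ?invr_ge0. Qed.

Lemma k2_potential_lipschitz s x y :
  k2_potential s y <= k2_potential s x + 3 / 2 * (dist x y)%:R.
Proof.
have tri u := dist_triangle u x y.
case: s => [a b|a b c] /=.
  by have := tri [fset a; b]; rewrite -(ler_nat R) natrD; lra.
have : (minn (dist [fset a; b] y) (dist [fset a; c] y) <=
    minn (dist [fset a; b] x) (dist [fset a; c] x) + dist x y)%N.
  by have := tri [fset a; b]; have := tri [fset a; c]; lia.
by rewrite -(ler_nat R) natrD; lra.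
Qed.

Lemma k2trans_stochastic s r : k2state_wf s ->
  [/\ all (fun p => 0 <= p.1) (k2trans R s r),
      \sum_(p <- k2trans R s r) p.1 = 1 &
      all (fun p => k2state_wf p.2) (k2trans R s r)].
Proof.
case: s => [a b|a b c] /=.
  move=> ab; case: ifP => [_|/norP [ra rb]];
    by rewrite /= big_seq1 ler01 ?ra ?rb ?ab.
case/and3P => ab ac bc.
have [_|ra] := eqVneq r a; first by rewrite /= big_seq1 ler01 ab ac bc.
have [_|rb] := eqVneq r b; first by rewrite /= big_seq1 ler01 eq_sym ab.
have [_|rc] := eqVneq r c; first by rewrite /= big_seq1 ler01 eq_sym ac.
rewrite /= !big_cons big_nil ra rb rc invr_ge0 ler0n; split => //.
by rewrite addr0 /=; field.
Qed.

Lemma k2_exp_potential_lipschitz s r x y : k2state_wf s ->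
  k2_exp_potential s r y <= k2_exp_potential s r x + 3 / 2 * (dist x y)%:R.
Proof.
move=> ws; have [w_ge0 w_sum1 _] := k2trans_stochastic r ws.
rewrite /k2_exp_potential -(sum_weighted_const (3 / 2 * (dist x y)%:R) w_sum1).
rewrite -big_split /=.
apply: ler_sum_all; apply: sub_all w_ge0 => p /= p_ge0.
by rewrite -mulrDr; apply: ler_wpM2l => //; apply: k2_potential_lipschitz.
Qed.

End K2Potential.

Ltac rewrite_neqs := repeat match goal with
  | H : is_true (?x != ?x) |- _ => by rewrite eqxx in H
  | H : is_true (_ != _) |- _ =>
      rewrite ?(negbTE H); rewrite eq_sym in H; rewrite ?(negbTE H); clear H
  end.

Ltac solve_coupling := apply: coupling_intro => /=;
  [ rewrite ?mul1r ?mulr1 ?ler01 ?invr_ge0 ?ler0n //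
  | rewrite ?mul1r ?mulr1 ?ltr01 ?invr_gt0 ?ltr0n //
  | rewrite ?mul1r ?mulr1 ?ltr01 ?invr_gt0 ?ltr0n //
  | rewrite !inE ?eqxx ?orbT //
  | move=> ?; rewrite /mass !big_cons !big_nil /=;
    repeat match goal with |- context [if ?b then _ else _] => case: b end; lra
  | move=> ?; rewrite /mass !big_cons !big_nil /=;
    repeat match goal with |- context [if ?b then _ else _] => case: b end; lra ].

Section K2StepCosts.
Variables (R : realType) (P : choiceType).
Implicit Types (a b c r : P).

Lemma k2step_cost_SA_hit a b r :
  a != b -> (r == a) || (r == b) -> k2step_cost R (SA a b) r <= 0.
Proof.
move=> ab hit; rewrite /k2step_cost /= hit.
apply: le_trans (dcost_le_coupling r (gamma := [:: (1, ([fset a; b], [fset a; b]))]) _) _.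
  by solve_coupling.
by rewrite big_seq1 cost_dist_r ?in_fset2 // dist_xx mulr0.
Qed.

Lemma k2step_cost_SA_miss a b r :
  a != b -> r != a -> r != b -> k2step_cost R (SA a b) r <= 1.
Proof.
move=> ab ra rb; rewrite /k2step_cost /= (negbTE ra) (negbTE rb) /=.
apply: le_trans (dcost_le_coupling r (gamma := [:: (2^-1, ([fset a; b], [fset r; a]));
   (2^-1, ([fset a; b], [fset r; b]))]) _) _.
  by solve_coupling.
rewrite !big_cons big_nil /= !cost_dist_r ?fset21 // !dist_pair // !in_fset2 ?eqxx.
by rewrite_neqs; rewrite /=; lra.
Qed.

Lemma k2step_cost_SB_first a b c : k2step_cost R (SB a b c) a <= 0.
Proof.
rewrite /k2step_cost /= eqxx.
apply: le_trans (dcost_le_coupling a (gamma := [:: (2^-1, ([fset a; b], [fset a; b]));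
   (2^-1, ([fset a; c], [fset a; c]))]) _) _.
  by solve_coupling.
by rewrite !big_cons big_nil /= !cost_dist_r ?fset21 // !dist_xx !mulr0 !addr0.
Qed.

Lemma k2step_cost_SB_second a b c :
  a != b -> a != c -> b != c -> k2step_cost R (SB a b c) b <= 2^-1.
Proof.
move=> ab ac bc; rewrite /k2step_cost /= eq_sym (negbTE ab) eqxx.
apply: le_trans (dcost_le_coupling b (gamma := [:: (2^-1, ([fset a; b], [fset b; a]));
   (2^-1, ([fset a; c], [fset b; a]))]) _) _.
  by solve_coupling.
rewrite !big_cons big_nil /= !cost_dist_r ?fset21 // !dist_pair // !in_fset2 ?eqxx.
by rewrite_neqs; rewrite /= ?orbT /=; lra.
Qed.

Lemma k2step_cost_SB_third a b c :
  a != b -> a != c -> b != c -> k2step_cost R (SB a b c) c <= 2^-1.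
Proof.
move=> ab ac bc; rewrite /k2step_cost /= eq_sym (negbTE ac) eq_sym (negbTE bc) eqxx.
apply: le_trans (dcost_le_coupling c (gamma := [:: (2^-1, ([fset a; b], [fset c; a]));
   (2^-1, ([fset a; c], [fset c; a]))]) _) _.
  by solve_coupling.
rewrite !big_cons big_nil /= !cost_dist_r ?fset21 // !dist_pair // !in_fset2 ?eqxx.
by rewrite_neqs; rewrite /= ?orbT /=; lra.
Qed.

Lemma k2step_cost_SB_miss a b c r :
  a != b -> a != c -> b != c -> r != a -> r != b -> r != c ->
  k2step_cost R (SB a b c) r <= 1.
Proof.
move=> ab ac bc ra rb rc; rewrite /k2step_cost /= (negbTE ra) (negbTE rb) (negbTE rc).
apply: le_trans (dcost_le_coupling r (gamma := [:: (6^-1, ([fset a; b], [fset r; a]));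
   (3^-1, ([fset a; b], [fset r; b])); (6^-1, ([fset a; c], [fset r; a]));
   (3^-1, ([fset a; c], [fset r; c]))]) _) _.
  by solve_coupling.
rewrite !big_cons big_nil /= !cost_dist_r ?fset21 // !dist_pair // !in_fset2 ?eqxx.
by rewrite_neqs; rewrite /= ?orbT /=; lra.
Qed.

End K2StepCosts.

Section K2Amortization.
Variables (R : realType) (P : choiceType).
Implicit Types (a b c r u : P) (s : k2state P).

Lemma k2_amortized_SA a b r u : a != b -> u != r ->
  k2step_cost R (SA a b) r + k2_exp_potential R (SA a b) r [fset r; u]
    <= k2_potential R (SA a b) [fset r; u].
Proof.
move=> ab ur; rewrite /k2_exp_potential.
have [hit|] := boolP ((r == a) || (r == b)).
  have := k2step_cost_SA_hit R ab hit.
  by rewrite /= hit big_seq1 /= mul1r; lra.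
case/norP => ra rb; have := k2step_cost_SA_miss R ab ra rb.
rewrite /= (negbTE ra) (negbTE rb) big_seq1 /= mul1r.
rewrite min_dist_pairs // !dist_pair // !in_fset2 !natrD.
case: (eqVneq u a) => [->|ua]; [|case: (eqVneq u b) => [->|ub]];
  rewrite ?eqxx; rewrite_neqs; rewrite /= ?orbT /=; lra.
Qed.

Lemma k2_amortized_SB a b c r u : a != b -> a != c -> b != c -> u != r ->
  k2step_cost R (SB a b c) r + k2_exp_potential R (SB a b c) r [fset r; u]
    <= k2_potential R (SB a b c) [fset r; u].
Proof.
move=> ab ac bc ur; rewrite /k2_exp_potential.
have ba : b != a by rewrite eq_sym.
have ca : c != a by rewrite eq_sym.
have [->|ra] := eqVneq r a.
  have := k2step_cost_SB_first R a b c.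
  by rewrite /= eqxx big_seq1 /= mul1r; lra.
have [->|rb] := eqVneq r b.
  have := k2step_cost_SB_second R ab ac bc.
  rewrite /= eq_sym (negbTE ab) eqxx big_seq1 /= mul1r.
  rewrite min_dist_pairs // !dist_pair // !in_fset2 !natrD.
  case: (eqVneq u a) => [->|ua]; [|case: (eqVneq u c) => [->|uc]];
    rewrite ?eqxx; rewrite_neqs; rewrite /= ?orbT /=; lra.
have [->|rc] := eqVneq r c.
  have := k2step_cost_SB_third R ab ac bc.
  rewrite /= eq_sym (negbTE ac) eq_sym (negbTE bc) eqxx big_seq1 /= mul1r.
  rewrite min_dist_pairs // !dist_pair // !in_fset2 !natrD.
  case: (eqVneq u a) => [->|ua]; [|case: (eqVneq u b) => [->|ub]];
    rewrite ?eqxx; rewrite_neqs; rewrite /= ?orbT /=; lra.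
have := k2step_cost_SB_miss R ab ac bc ra rb rc.
rewrite /= (negbTE ra) (negbTE rb) (negbTE rc) !big_cons big_nil /= addr0.
rewrite min_dist_pairs // !dist_pair // !in_fset2 !natrD.
case: (eqVneq u a) => [->|ua]; [|case: (eqVneq u b) => [->|ub]];
  [| |case: (eqVneq u c) => [->|uc]];
  rewrite ?eqxx; rewrite_neqs; rewrite /= ?orbT /=; lra.
Qed.

Lemma k2_amortized_pair s r u : k2state_wf s -> u != r ->
  k2step_cost R s r + k2_exp_potential R s r [fset r; u] <= k2_potential R s [fset r; u].
Proof.
case: s => [a b|a b c] /= => [ab|/and3P [ab ac bc]];
  [exact: k2_amortized_SA | exact: k2_amortized_SB].
Qed.

Lemma k2_amortized_served s r (z : conf P) :
  k2state_wf s -> is_conf2 z -> r \in z ->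
  k2step_cost R s r + k2_exp_potential R s r z <= k2_potential R s z.
Proof.
move=> ws /conf2P [p [q [pq ->]]] /fset2P [] ->; last rewrite fsetUC;
  by apply: k2_amortized_pair; rewrite // eq_sym.
Qed.

End K2Amortization.

Lemma k2_expected_cost_le_sched (R : realType) (P : choiceType)
    (rho : seq P) (s : k2state P) (x : conf P) (xs : seq (conf P)) :
  k2state_wf s -> is_conf2 x -> size xs = size rho -> all (@is_conf2 P) xs ->
  k2_expected_cost R s rho <= 3 / 2 * sched_cost R x rho xs + k2_potential R s x.
Proof.
elim: rho s x xs => [|r rho IH] s x [|y xs] //= ws cx.
  by move=> _ _; rewrite mulr0 add0r k2_potential_ge0.
move=> [size_xs] /andP [cy cxs].
have [w_ge0 w_sum1 w_wf] := k2trans_stochastic R r ws.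
have future : \sum_(p <- k2trans R s r) p.1 * k2_expected_cost R p.2 rho <=
    3 / 2 * sched_cost R y rho xs + k2_exp_potential R s r y.
  rewrite /k2_exp_potential -(sum_weighted_const (3 / 2 * sched_cost R y rho xs) w_sum1).
  rewrite -big_split /=.
  have w : all (predI (fun p : R * k2state P => 0 <= p.1) (fun p => k2state_wf p.2))
      (k2trans R s r) by rewrite all_predI w_ge0 w_wf.
  apply: ler_sum_all; apply: sub_all w => p /andP [p_ge0 wp] /=.
  by rewrite -mulrDr; apply: ler_wpM2l => //; apply: IH.
have step : k2step_cost R s r + k2_exp_potential R s r y <=
    3 / 2 * cost R x r y + k2_potential R s x.
  apply: amortize_adversary_move cx cy; first by lra.
  - by move=> z; apply: k2_amortized_served.
  - by move=> u v; apply: k2_exp_potential_lipschitz.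
  - by move=> u v; apply: k2_potential_lipschitz.
lra.
Qed.

Theorem mainTheorem10 (R : realType) (P : choiceType)
  (P_infinite : forall s : seq P, exists p : P, p \notin s)
  (a b : P) (hab : a != b) :
  exists K : R, forall rho : seq P,
    k2_expected_cost R (SA a b) rho
      <= 3 / 2 * cost_opt R ([fset a; b]%fset) rho + K.
Proof.
exists 0 => rho; rewrite addr0.
have c0 : is_conf2 [fset a; b] by exact: is_conf2_pair.
suff : 2 / 3 * k2_expected_cost R (SA a b) rho <= cost_opt R [fset a; b] rho by lra.
apply: lb_le_inf.
  exists (sched_cost R [fset a; b] rho (nseq (size rho) [fset a; b])).
  by exists (nseq (size rho) [fset a; b]); rewrite size_nseq all_nseq c0 orbT.
move=> _ [xs [size_xs conf_xs ->]].
have := k2_expected_cost_le_sched R (s := SA a b) hab c0 size_xs conf_xs.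
rewrite /= dist_xx mulr0 addr0; lra.
Qed.
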